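(* Let $a>0$, $p>1$, and let $\phi\in C^1((0,a])\cap C^0([0,a])$ satisfy $\phi(0)=0$, $\phi(t)>0$ for $t\in(0,a]$, and $c_1t^{p-1+\delta}\le\phi(t)\le c_2t^{p-1+\delta}$ for all $t\in(0,a]$, for some constants $c_1,c_2,\delta>0$. Define \[ \eta_a(t)=\frac{\phi(t)^{-\frac1{p-1}}}{\int_t^a\phi(\sigma)^{-\frac1{p-1}}\,d\sigma},\quad t\in(0,a). \] Then for all $t\in(0,a)$, \[ \left(\frac{c_1}{c_2}\right)^{\frac1{p-1}}\frac{\delta}{p-1}\,\frac{a^{\delta/(p-1)}}{t\,(a^{\delta/(p-1)}-t^{\delta/(p-1)})}\le\eta_a(t)\le\left(\frac{c_2}{c_1}\right)^{\frac1{p-1}}\frac{\delta}{p-1}\,\frac{a^{\delta/(p-1)}}{t\,(a^{\delta/(p-1)}-t^{\delta/(p-1)})}. \] *)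

From Stdlib Require Import Reals.
From Coquelicot Require Import Coquelicot.
Open Scope R_scope.

Definition cont_on_closed (phi : R -> R) (a : R) : Prop :=
  forall t, 0 <= t <= a ->
    filterlim phi (within (fun s => 0 <= s <= a) (locally t)) (locally (phi t)).

Definition C1_on_half_open (phi : R -> R) (a : R) : Prop :=
  exists dphi : R -> R,
    (forall t, 0 < t <= a ->
       filterlim (fun s => (phi s - phi t) / (s - t))
         (within (fun s => 0 < s <= a /\ s <> t) (locally t)) (locally (dphi t)))
    /\ (forall t, 0 < t <= a ->
       filterlim dphi (within (fun s => 0 < s <= a) (locally t)) (locally (dphi t))).

Definition eta (phi : R -> R) (p a t : R) : R :=
  Rpower (phi t) (- / (p - 1)) /
  RInt (fun s => Rpower (phi s) (- / (p - 1))) t a.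

(* Raising the two-sided bound on phi to the power -1/(p-1) sandwiches
   psi := phi^(-1/(p-1)) between multiples of the pure power s^(-(1+e)),
   e = delta/(p-1).  For the pure power, eta_a is computed exactly as
   e a^e / (t (a^e - t^e)); in the quotient psi(t) / int_t^a psi the
   constants of the two bounds enter once in the numerator and once in the
   denominator, which produces the factors (c1/c2)^(1/(p-1)) and
   (c2/c1)^(1/(p-1)). *)

From Stdlib Require Import Reals Lra.
From Coquelicot Require Import Coquelicot.
Open Scope R_scope.

Definition clamp (a b s : R) : R := Rmax a (Rmin s b).

Section Clamp.

Variables a b : R.
Hypothesis Hab : a <= b.

Lemma clamp_in s : a <= clamp a b s <= b.
Proof. unfold clamp, Rmax, Rmin; repeat destruct Rle_dec; lra. Qed.

Lemma clamp_id s : a <= s <= b -> clamp a b s = s.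
Proof. intros Hs; unfold clamp, Rmax, Rmin; repeat destruct Rle_dec; lra. Qed.

Lemma clamp_lipschitz s x : Rabs (clamp a b s - clamp a b x) <= Rabs (s - x).
Proof.
  unfold clamp, Rmax, Rmin.
  repeat destruct Rle_dec; unfold Rabs; repeat destruct Rcase_abs; lra.
Qed.

Lemma continuous_clamp x : continuous (clamp a b) x.
Proof.
  apply filterlim_locally; intros eps; exists eps; intros y Hy.
  exact (Rle_lt_trans _ _ _ (clamp_lipschitz y x) Hy).
Qed.

(* Extending f by constants outside [a, b] gives a continuous function on R
   that agrees with f on [a, b]. *)
Lemma ex_RInt_continuous_within (f : R -> R) :
  (forall x, a <= x <= b ->
     filterlim f (within (fun s => a <= s <= b) (locally x)) (locally (f x))) ->
  ex_RInt f a b.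
Proof.
  intros Hf.
  apply (ex_RInt_ext (fun s => f (clamp a b s))).
  { intros x Hx; rewrite Rmin_left, Rmax_right in Hx by lra.
    rewrite clamp_id; lra. }
  apply (ex_RInt_continuous (V := R_CompleteNormedModule)); intros x _.
  eapply filterlim_comp; [|apply Hf, clamp_in].
  intros P HP; unfold filtermap.
  apply (filter_imp (fun s => a <= clamp a b s <= b -> P (clamp a b s))).
  - intros s Hs; apply Hs, clamp_in.
  - exact (continuous_clamp x _ HP).
Qed.

End Clamp.

Lemma continuous_Rpower (q y : R) : 0 < y -> continuous (fun z => Rpower z q) y.
Proof.
  intros Hy; apply (ex_derive_continuous (K := R_AbsRing) (V := R_NormedModule)).
  exists (q * Rpower y (q - 1)).
  apply is_derive_Reals, derivable_pt_lim_power, Hy.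
Qed.

Lemma ex_RInt_Rpower_comp (q : R) (phi : R -> R) (a t : R) :
  cont_on_closed phi a -> (forall s, 0 < s <= a -> 0 < phi s) -> 0 < t <= a ->
  ex_RInt (fun s => Rpower (phi s) q) t a.
Proof.
  intros Hcont Hpos Ht.
  apply ex_RInt_continuous_within; [lra |]; intros x Hx.
  apply (filterlim_comp _ _ _ phi (fun z => Rpower z q) _ (locally (phi x)));
    [| apply continuous_Rpower, Hpos; lra].
  intros P HP; unfold filtermap, within.
  apply (filter_imp (fun s => 0 <= s <= a -> P (phi s))).
  - intros s Hs Hts; apply Hs; lra.
  - apply (Hcont x); [lra | exact HP].
Qed.

Lemma is_RInt_Rpower_opp (e t a : R) : 0 < e -> 0 < t <= a ->
  is_RInt (fun s => Rpower s (- (1 + e))) t a ((Rpower t (- e) - Rpower a (- e)) / e).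
Proof.
  intros He Ht.
  replace ((Rpower t (- e) - Rpower a (- e)) / e)
    with (minus (/ - e * Rpower a (- e)) (/ - e * Rpower t (- e)))
    by (unfold minus, plus, opp; simpl; field; lra).
  apply (is_RInt_derive (V := R_CompleteNormedModule) (fun s => / - e * Rpower s (- e)));
    intros x Hx; rewrite Rmin_left, Rmax_right in Hx by lra.
  - replace (Rpower x (- (1 + e))) with (/ - e * (- e * Rpower x (- e - 1)))
      by (replace (- e - 1) with (- (1 + e)) by ring; field; lra).
    apply is_derive_scal, is_derive_Reals, derivable_pt_lim_power; lra.
  - apply continuous_Rpower; lra.
Qed.

Lemma Rpower_opp_le (x y q : R) : 0 < x <= y -> 0 <= q -> Rpower y (- q) <= Rpower x (- q).
Proof.
  intros Hxy Hq; rewrite !Rpower_Ropp.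
  apply Rinv_le_contravar; [apply exp_pos | apply Rle_Rpower_l; lra].
Qed.

Lemma Rpower_opp_mult_pow (c s k q : R) : 0 < c -> 0 < s ->
  Rpower (c * Rpower s k) (- q) = / Rpower c q * Rpower s (- (k * q)).
Proof.
  intros Hc Hs.
  rewrite <- Rpower_mult_distr, Rpower_mult, !Rpower_Ropp by (apply exp_pos || lra).
  rewrite <- Ropp_mult_distr_r, Rpower_Ropp; reflexivity.
Qed.

Lemma Rpower_opp_sandwich (c1 c2 x s k q : R) : 0 < c1 -> 0 < s -> 0 <= q ->
  c1 * Rpower s k <= x <= c2 * Rpower s k ->
  / Rpower c2 q * Rpower s (- (k * q)) <= Rpower x (- q) <=
  / Rpower c1 q * Rpower s (- (k * q)).
Proof.
  intros Hc1 Hs Hq Hx.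
  assert (Hlo : 0 < c1 * Rpower s k) by (apply Rmult_lt_0_compat; [lra | apply exp_pos]).
  assert (Hc2 : 0 < c2) by (apply (Rmult_lt_reg_r (Rpower s k)); [apply exp_pos | lra]).
  rewrite <- !Rpower_opp_mult_pow by lra.
  split; apply Rpower_opp_le; lra.
Qed.

Lemma Rpower_div_base (x y q : R) : 0 < x -> 0 < y ->
  Rpower (x / y) q = Rpower x q / Rpower y q.
Proof.
  intros Hx Hy; unfold Rdiv, Rpower.
  rewrite ln_mult, ln_Rinv, Rmult_plus_distr_l, exp_plus, <- exp_Ropp
    by (try apply Rinv_0_lt_compat; lra).
  f_equal; f_equal; ring.
Qed.

Lemma ratio_integral_bounds (f g : R -> R) (t a L U J : R) :
  t < a -> 0 < L -> 0 < J -> 0 < g t -> ex_RInt f t a -> is_RInt g t a J ->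
  (forall s, t <= s <= a -> L * g s <= f s <= U * g s) ->
  L / U * (g t / J) <= f t / RInt f t a /\ f t / RInt f t a <= U / L * (g t / J).
Proof.
  intros Hta HL HJ Hgt Hf Hg Hfg.
  assert (HU : L <= U) by (destruct (Hfg t ltac:(lra)); nra).
  assert (HgL : is_RInt (fun s => L * g s) t a (L * J)) by exact (is_RInt_scal g t a L J Hg).
  assert (HgU : is_RInt (fun s => U * g s) t a (U * J)) by exact (is_RInt_scal g t a U J Hg).
  assert (Hint_lo : L * J <= RInt f t a).
  { rewrite <- (is_RInt_unique _ _ _ _ HgL).
    apply RInt_le; [lra | eexists; exact HgL | exact Hf |].
    intros s Hs; apply Hfg; lra. }
  assert (Hint_hi : RInt f t a <= U * J).
  { rewrite <- (is_RInt_unique _ _ _ _ HgU).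
    apply RInt_le; [lra | exact Hf | eexists; exact HgU |].
    intros s Hs; apply Hfg; lra. }
  destruct (Hfg t ltac:(lra)) as [Hft_lo Hft_hi].
  assert (HLJ : 0 < L * J) by nra.
  split.
  - replace (L / U * (g t / J)) with (L * g t / (U * J)) by (field; lra).
    unfold Rdiv; apply Rmult_le_compat; try nra.
    + left; apply Rinv_0_lt_compat; lra.
    + apply Rinv_le_contravar; lra.
  - replace (U / L * (g t / J)) with (U * g t / (L * J)) by (field; lra).
    unfold Rdiv; apply Rmult_le_compat; try nra.
    + left; apply Rinv_0_lt_compat; lra.
    + apply Rinv_le_contravar; lra.
Qed.

Lemma Rpower_opp_div_integral (e t a : R) : 0 < e -> 0 < t < a ->
  Rpower t (- (1 + e)) / ((Rpower t (- e) - Rpower a (- e)) / e)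
  = e * (Rpower a e / (t * (Rpower a e - Rpower t e))).
Proof.
  intros He Ht.
  assert (HT : 0 < Rpower t e) by apply exp_pos.
  assert (HTA : Rpower t e < Rpower a e) by (apply Rlt_Rpower_l; lra).
  rewrite !Rpower_Ropp, Rpower_plus, Rpower_1 by lra.
  field; repeat split; lra.
Qed.

Theorem lemma2p2 (a p : R) (phi : R -> R) (c1 c2 delta : R) :
  0 < a -> 1 < p ->
  C1_on_half_open phi a -> cont_on_closed phi a ->
  phi 0 = 0 ->
  (forall t, 0 < t <= a -> 0 < phi t) ->
  0 < c1 -> 0 < c2 -> 0 < delta ->
  (forall t, 0 < t <= a ->
     c1 * Rpower t (p - 1 + delta) <= phi t /\ phi t <= c2 * Rpower t (p - 1 + delta)) ->
  forall t, 0 < t < a ->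
    Rpower (c1 / c2) (/ (p - 1)) * (delta / (p - 1)) *
      (Rpower a (delta / (p - 1)) /
       (t * (Rpower a (delta / (p - 1)) - Rpower t (delta / (p - 1)))))
    <= eta phi p a t
    /\ eta phi p a t <=
    Rpower (c2 / c1) (/ (p - 1)) * (delta / (p - 1)) *
      (Rpower a (delta / (p - 1)) /
       (t * (Rpower a (delta / (p - 1)) - Rpower t (delta / (p - 1))))).
Proof.
  intros Ha Hp _ Hcont _ Hpos Hc1 Hc2 Hd Hbounds t Ht.
  set (q := / (p - 1)); set (e := delta / (p - 1)).
  assert (Hq : 0 < q) by (apply Rinv_0_lt_compat; lra).
  assert (He : 0 < e) by (apply Rdiv_lt_0_compat; lra).
  assert (Hexp : (p - 1 + delta) * q = 1 + e) by (unfold q, e; field; lra).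
  assert (Hpsi_int := ex_RInt_Rpower_comp (- q) phi a t Hcont Hpos ltac:(lra)).
  destruct (ratio_integral_bounds (fun s => Rpower (phi s) (- q))
              (fun s => Rpower s (- (1 + e))) t a (/ Rpower c2 q) (/ Rpower c1 q)
              ((Rpower t (- e) - Rpower a (- e)) / e))
    as [Hlo Hhi]; try lra; try apply exp_pos; try assumption.
  - apply Rinv_0_lt_compat, exp_pos.
  - apply Rdiv_lt_0_compat; [| lra].
    rewrite !Rpower_Ropp; apply Rlt_0_minus, Rinv_lt_contravar;
      [apply Rmult_lt_0_compat; apply exp_pos | apply Rlt_Rpower_l; lra].
  - apply is_RInt_Rpower_opp; lra.
  - intros s Hs; rewrite <- Hexp.
    apply Rpower_opp_sandwich; try lra; apply Hbounds; lra.
  - unfold eta; fold q e.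
    rewrite Rpower_opp_div_integral in Hlo, Hhi by lra.
    rewrite !Rpower_div_base, !Rmult_assoc by lra.
    replace (/ Rpower c2 q / / Rpower c1 q) with (Rpower c1 q / Rpower c2 q) in Hlo
      by (field; split; apply Rgt_not_eq, exp_pos).
    replace (/ Rpower c1 q / / Rpower c2 q) with (Rpower c2 q / Rpower c1 q) in Hhi
      by (field; split; apply Rgt_not_eq, exp_pos).
    split; assumption.
Qed.
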